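(* Let $G=(V,E)$ be a simple, unoriented, locally finite graph with graph distance $d$, and let $x\neq x'$ be two vertices at finite distance, each of positive degree. Then for every $t\in(0,1/2]$, $$\operatorname{ric}(x,x')=\frac{\kappa^t(x,x')}{t}.$$
   Context: For a vertex $x$, $S_x$ is the set of neighbours of $x$, $d_x=|S_x|$, and $d$ is the graph distance (length of a shortest edge path). The lazy random walk $\mu^t_x$ is the probability measure with $\mu^t_x(x)=1-t$, $\mu^t_x(y)=t/d_x$ for $y\in S_x$, and $0$ elsewhere. A coupling between probability measures $\mu,\mu'$ on $V$ is a nonnegative function $\xi$ on $V\times V$ with marginals $\mu$ and $\mu'$. The Wasserstein distance is $W_1(\mu,\mu')=\inf_\xi\sum_{y,y'}\xi(y,y')d(y,y')$, the infimum over all couplings. Set $\kappa^t(x,x')=1-\frac{W_1(\mu^t_x,\mu^t_{x'})}{d(x,x')}$ and define the (asymptotic) Ollivier–Ricci curvature $\operatorname{ric}(x,x')=\liminf_{t\to0^+}\kappa^t(x,x')/t$. *)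

From HB Require Import structures.
From mathcomp Require Import all_boot all_order all_algebra.
From mathcomp Require Import finmap.
From mathcomp Require Import all_classical all_reals all_analysis.
Set Implicit Arguments. Unset Strict Implicit. Unset Printing Implicit Defensive.
Import Order.TTheory GRing.Theory Num.Theory.
Import numFieldNormedType.Exports.
Local Open Scope classical_set_scope.
Local Open Scope ring_scope.

(* A locally finite graph on the vertex type V is given by its neighbour
   function: S_x = nbr x is a finite set. *)
Definition simple_graph (V : choiceType) (nbr : V -> {fset V}) : Prop :=
  (forall x y : V, (y \in nbr x) = (x \in nbr y)) /\
  (forall x : V, x \notin nbr x).

Definition deg (V : choiceType) (nbr : V -> {fset V}) (x : V) : nat :=
  #|` nbr x|%fset.

Fixpoint walk (V : choiceType) (nbr : V -> {fset V}) (n : nat) (x y : V) : Prop :=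
  match n with
  | 0 => x = y
  | k.+1 => exists2 z, z \in nbr x & walk nbr k z y
  end.

(* graph distance (+oo if no path) *)
Definition gdist (R : realType) (V : choiceType) (nbr : V -> {fset V}) (x y : V)
  : \bar R :=
  ereal_inf [set (n%:R)%:E | n in [set n | walk nbr n x y]].

Definition lazy_rw (R : realType) (V : choiceType) (nbr : V -> {fset V})
  (t : R) (x : V) (y : V) : R :=
  if y == x then 1 - t
  else if y \in nbr x then t / (deg nbr x)%:R else 0.

Definition coupling (R : realType) (V : choiceType) (mu mu' : V -> R)
  (xi : V -> V -> R) : Prop :=
  (forall y y', 0 <= xi y y') /\
  (forall y, (\esum_(y' in [set: V]) (xi y y')%:E = (mu y)%:E)%E) /\
  (forall y', (\esum_(y in [set: V]) (xi y y')%:E = (mu' y')%:E)%E).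

Definition W1 (R : realType) (V : choiceType) (nbr : V -> {fset V})
  (mu mu' : V -> R) : \bar R :=
  ereal_inf [set (\esum_(p in [set: V * V])
                    ((xi p.1 p.2)%:E * gdist R nbr p.1 p.2))%E
            | xi in [set xi | coupling mu mu' xi]].

(* kappa^t(x,x') = 1 - W1(mu^t_x, mu^t_x') / d(x,x')  (both quantities are
   finite in the situation of interest; fine maps them to R) *)
Definition kappa (R : realType) (V : choiceType) (nbr : V -> {fset V})
  (t : R) (x x' : V) : R :=
  1 - fine (W1 nbr (lazy_rw nbr t x) (lazy_rw nbr t x'))
      / fine (gdist R nbr x x').

Definition ric (R : realType) (V : choiceType) (nbr : V -> {fset V})
  (x x' : V) : \bar R :=
  limf_einf (fun t : R => (kappa nbr t x x' / t)%:E) (0^'+).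

From HB Require Import structures.
From mathcomp Require Import all_boot all_order all_algebra.
From mathcomp Require Import finmap.
From mathcomp Require Import all_classical all_reals all_analysis.
From mathcomp Require Import zify ring lra.
Import Order.TTheory GRing.Theory Num.Theory.
Import numFieldNormedType.Exports.
Local Open Scope classical_set_scope.
Local Open Scope ring_scope.

(* For t <= 1/2 the lazy walk splits as mu^t_z = (1 - 2t) delta_z + 2t mu^(1/2)_z.
   In a coupling of mu^t_x and mu^t_x' the vertex x keeps mass 1 - t, of which at
   most t can go anywhere but x', so at least 1 - 2t is moved from x to x'.
   Removing that Dirac part identifies the couplings of mu^t_x, mu^t_x' with
   (1 - 2t) delta_(x,x') + 2t (couplings of the half-lazy walks), whence
   W1(mu^t_x, mu^t_x') = (1 - 2t) d(x,x') + 2t W1(mu^(1/2)_x, mu^(1/2)_x').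
   Thus kappa^t(x,x') / t = 2 (1 - W1(mu^(1/2)_x, mu^(1/2)_x') / d(x,x')) does not
   depend on t in (0, 1/2], and its liminf at 0+ is that constant. *)

Section graph_distance.
Context {V : choiceType} (nbr : V -> {fset V}).

Lemma walk_cat {m n a b c} :
  walk nbr m a b -> walk nbr n b c -> walk nbr (m + n) a c.
Proof.
elim: m a => [|m IH] a /=; first by move=> ->.
by case=> z za zb bc; exists z => //; apply: IH.
Qed.

Definition closed_nbr (z y : V) : bool := (y == z) || (y \in nbr z).

Lemma walk_closed_nbr {z y : V} : simple_graph nbr -> closed_nbr z y ->
  exists2 k, (k <= 1)%N & walk nbr k y z /\ walk nbr k z y.
Proof.
move=> [sym _] /orP[/eqP->|yz]; first by exists 0%N.
by exists 1%N => //=; split; [exists z; rewrite // -sym|exists y].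
Qed.

Context {R : realType}.
Local Open Scope ereal_scope.

Lemma gdist_le_walk {n a b} : walk nbr n a b -> gdist R nbr a b <= n%:R%:E.
Proof. by move=> w; apply: ereal_inf_lbound; exists n. Qed.

Lemma gdist_ge0 a b : 0 <= gdist R nbr a b.
Proof. by apply: le_ereal_inf_tmp => _ [n _ <-]; rewrite lee_fin. Qed.

Lemma gdist_ge1 {a b} : a != b -> 1 <= gdist R nbr a b.
Proof.
move=> ab; apply: le_ereal_inf_tmp => _ [[|n] /= w <-].
  by rewrite w eqxx in ab.
by rewrite lee_fin ler1n.
Qed.

Lemma gdist_closed_nbr_le x x' y y' :
  simple_graph nbr -> closed_nbr x y -> closed_nbr x' y' ->
  gdist R nbr y y' <= gdist R nbr x x' + 2%:E.
Proof.
move=> G /(walk_closed_nbr G)[k1 k1le [w1 _]] /(walk_closed_nbr G)[k2 k2le [_ w2]].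
rewrite -leeBlDr //; apply: le_ereal_inf_tmp => _ [n /= w <-].
rewrite EFinN leeBlDr // -EFinD.
apply: (le_trans (gdist_le_walk (walk_cat (walk_cat w1 w) w2))).
by rewrite lee_fin -natrD ler_nat; lia.
Qed.

End graph_distance.

Section esum_facts.
Context {R : realType} {T : choiceType}.
Local Open Scope ereal_scope.

Lemma esumZl (S : set T) (r : R) (f : T -> \bar R) :
  (0 <= r)%R -> (forall i, 0 <= f i) ->
  \esum_(i in S) (r%:E * f i) = r%:E * \esum_(i in S) f i.
Proof.
move=> r0 f0; rewrite /esum -ereal_supZl //; last first.
  by apply/set0P; exists 0; exists set0; [exact: fsets_set0|rewrite fsbig_set0].
congr ereal_sup; rewrite image_comp; apply: eq_imagel => A _ /=.
by rewrite ge0_mule_fsumr.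
Qed.

Lemma esum_if_eq (p : T) (e : \bar R) :
  0 <= e -> \esum_(i in [set: T]) (if i == p then e else 0) = e.
Proof.
move=> e0; rewrite -[RHS](@esum_set1 R T p (fun _ => e)) //.
by rewrite [RHS]esum_mkcond; apply: eq_esum => i _; rewrite in_set1.
Qed.

Lemma esum_if_in_fset (A : {fset T}) (c : R) :
  (0 <= c)%R ->
  \esum_(i in [set: T]) (if i \in A then c%:E else 0) = (c *+ #|` A|%fset)%:E.
Proof.
move=> c0; transitivity (\esum_(i in [set` A]) (c%:E : \bar R)).
  by rewrite [RHS]esum_mkcond; apply: eq_esum => i _; rewrite mem_setE.
rewrite esum_fset // fsbig_finite //= set_fsetK sumEFin big_const_seq.
by rewrite count_predT iter_addr addr0.
Qed.

Lemma esum_ge_term (f : T -> \bar R) p :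
  (forall i, 0 <= f i) -> f p <= \esum_(i in [set: T]) f i.
Proof.
move=> f0; apply: esum_ge; exists [set p]; first by split => //; exact: finite_set1.
by rewrite fsbig_set1.
Qed.

End esum_facts.

Section ereal_facts.
Context {R : realType}.
Local Open Scope ereal_scope.

Lemma ereal_inf_addl (a : \bar R) (X : set (\bar R)) :
  a \is a fin_num -> ereal_inf [set a + x | x in X] = a + ereal_inf X.
Proof.
have shift_ge (b : \bar R) Y : b + ereal_inf Y <= ereal_inf [set b + y | y in Y].
  apply: le_ereal_inf_tmp => _ [y Yy <-]; apply: leeD2l.
  exact: ereal_inf_lbound.
move=> af; apply/eqP; rewrite eq_le shift_ge andbT.
have := shift_ge (- a) [set a + x | x in X]; rewrite image_comp.
have -> : (fun x => - a + x) \o (fun x => a + x) = id.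
  by apply/funext => y /=; rewrite addeA (addeC (- a)) subee // add0e.
by rewrite image_id addeC leeBlDr // addeC.
Qed.

Lemma EFin_of_affine_eq (a c b : R) (E : \bar R) :
  (0 < c)%R -> a%:E + c%:E * E = (a + c * b)%:E -> E = b%:E.
Proof.
move=> c0; case: E => [e| |] /=.
- by rewrite -EFinM -EFinD => -[] /addrI /(mulfI (lt0r_neq0 c0)) ->.
- by rewrite muleC gt0_mulye ?lte_fin.
- by rewrite muleC gt0_mulNye ?lte_fin.
Qed.

Lemma limf_einf_near_cst (T : choiceType) (X : filteredType T)
    (F : set_system X) (f : X -> \bar R) (c : \bar R) :
  ProperFilter F -> (\forall s \near F, f s = c) -> limf_einf f F = c.
Proof.
move=> PF fc; rewrite limf_einfE; apply/eqP; rewrite eq_le; apply/andP; split.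
- apply: ge_ereal_sup => _ [A FA <-].
  have [s [As fsc]] := filter_ex (filterI FA fc).
  by apply: ge_ereal_inf; exists (f s); [exists s|rewrite fsc].
- apply: le_ereal_sup_tmp; exists (ereal_inf (f @` [set s | f s = c])).
    by exists [set s | f s = c].
  by apply: le_ereal_inf_tmp => _ [s fsc <-]; rewrite fsc.
Qed.

End ereal_facts.

Section dirac_mixtures.
Context {R : realType} {V : choiceType}.
Implicit Types (s : R) (mu : V -> R) (eta xi : V -> V -> R).

Definition dirac_mix s (z : V) mu : V -> R :=
  fun y => (1 - s) * (y == z)%:R + s * mu y.

Definition dirac_mix2 s (x x' : V) eta : V -> V -> R :=
  fun y y' => (1 - s) * ((y, y') == (x, x'))%:R + s * eta y y'.

Lemma dirac_mix2_tr s x x' eta y y' :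
  dirac_mix2 s x x' eta y y' = dirac_mix2 s x' x (fun a b => eta b a) y' y.
Proof. by rewrite /dirac_mix2 !xpair_eqE andbC. Qed.

Local Open Scope ereal_scope.

Lemma esum_dirac_mix2_row s x x' eta y :
  (0 <= s <= 1)%R -> (forall y y', 0 <= eta y y')%R ->
  \esum_(y' in [set: V]) (dirac_mix2 s x x' eta y y')%:E =
  ((1 - s) * (y == x)%:R)%:E + s%:E * \esum_(y' in [set: V]) (eta y y')%:E.
Proof.
move=> /andP[s0 s1] eta0.
have s1' : (0 <= 1 - s)%R by rewrite subr_ge0.
transitivity (\esum_(y' in [set: V])
   ((if y' == x' then ((1 - s) * (y == x)%:R)%:E else 0) + s%:E * (eta y y')%:E)).
  apply: eq_esum => y' _; rewrite /dirac_mix2 xpair_eqE EFinD -EFinM.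
  by case: (y' == x'); rewrite ?andbT ?andbF ?mulr0 ?add0e.
rewrite esumD; last 2 first.
- by move=> v _; case: ifP => _ //; rewrite lee_fin mulr_ge0.
- by move=> v _; rewrite -EFinM lee_fin mulr_ge0.
by rewrite esum_if_eq ?lee_fin ?mulr_ge0 // esumZl // => v; rewrite lee_fin.
Qed.

Lemma esum_dirac_mix2_col s x x' eta y' :
  (0 <= s <= 1)%R -> (forall y y', 0 <= eta y y')%R ->
  \esum_(y in [set: V]) (dirac_mix2 s x x' eta y y')%:E =
  ((1 - s) * (y' == x')%:R)%:E + s%:E * \esum_(y in [set: V]) (eta y y')%:E.
Proof.
move=> s01 eta0; under eq_esum do rewrite dirac_mix2_tr.
by rewrite esum_dirac_mix2_row.
Qed.

Lemma coupling_dirac_mix2 s x x' mu mu' eta :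
  (0 <= s <= 1)%R -> coupling mu mu' eta ->
  coupling (dirac_mix s x mu) (dirac_mix s x' mu') (dirac_mix2 s x x' eta).
Proof.
move=> s01 [eta0 [row col]]; have /andP[s0 s1] := s01.
split; first by move=> y y'; rewrite addr_ge0 ?mulr_ge0 ?subr_ge0.
split => [y|y'].
- by rewrite esum_dirac_mix2_row // row -EFinM -EFinD.
- by rewrite esum_dirac_mix2_col // col -EFinM -EFinD.
Qed.

Lemma coupling_diag_ge x x' mu mu' xi :
  coupling mu mu' xi ->
  (mu x)%:E <= (xi x x')%:E + \esum_(y' in [set: V]) (if y' == x' then 0 else mu' y')%:E.
Proof.
move=> [xi0 [row col]]; rewrite -row -[X in X + _](esum_if_eq x') ?lee_fin //.
rewrite -esumD; last 2 first.
- by move=> v _; case: ifP => _ //; rewrite lee_fin.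
- move=> v _; case: ifP => _ //; rewrite -col; apply: esum_ge0 => u _.
  by rewrite lee_fin.
apply: le_esum => v _; case: eqP => [->|_]; first by rewrite adde0.
rewrite add0e -col; apply: (@esum_ge_term R V (fun u => (xi u v)%:E)) => u.
by rewrite lee_fin.
Qed.

Lemma esum_dirac_mix2_cost s x x' eta (c : V -> V -> \bar R) :
  (0 <= s <= 1)%R -> (forall y y', 0 <= eta y y')%R -> (forall y y', 0 <= c y y') ->
  \esum_(p in [set: V * V]) ((dirac_mix2 s x x' eta p.1 p.2)%:E * c p.1 p.2) =
  (1 - s)%:E * c x x' + s%:E * \esum_(p in [set: V * V]) ((eta p.1 p.2)%:E * c p.1 p.2).
Proof.
move=> /andP[s0 s1] eta0 c0.
have s1' : (0 <= 1 - s)%R by rewrite subr_ge0.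
transitivity (\esum_(p in [set: V * V])
   ((if p == (x, x') then (1 - s)%:E * c x x' else 0)
   + s%:E * ((eta p.1 p.2)%:E * c p.1 p.2))).
  apply: eq_esum => -[y y'] _ /=; rewrite /dirac_mix2 EFinD ge0_muleDl; last 2 first.
  - by rewrite lee_fin mulr_ge0.
  - by rewrite lee_fin mulr_ge0.
  rewrite EFinM -muleA [in X in _ + X]EFinM -muleA.
  by case: eqP => [[-> ->]|_]; rewrite ?mul1e // mul0e mule0 add0e.
rewrite esumD; last 2 first.
- by move=> v _; case: ifP => _ //; rewrite mule_ge0 ?lee_fin.
- by move=> v _; rewrite !mule_ge0 ?lee_fin.
rewrite esum_if_eq ?mule_ge0 ?lee_fin // esumZl //.
by move=> v; rewrite mule_ge0 ?lee_fin.
Qed.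

Lemma coupling_dirac_mix_decomp {s x x' mu mu' xi} :
  (0 < s <= 1)%R -> (1 - s <= xi x x')%R ->
  coupling (dirac_mix s x mu) (dirac_mix s x' mu') xi ->
  exists2 eta, coupling mu mu' eta & xi = dirac_mix2 s x x' eta.
Proof.
move=> /andP[s0 s1] xixx' [xi0 [row col]].
have s01 : (0 <= s <= 1)%R by rewrite ltW.
pose eta y y' := ((xi y y' - (1 - s) * ((y, y') == (x, x'))%:R) / s)%R.
have xiE : xi = dirac_mix2 s x x' eta.
  apply/funext => y; apply/funext => y'.
  by rewrite /dirac_mix2 /eta [(s * _)%R]mulrC divfK ?gt_eqF // addrC subrK.
have eta0 y y' : (0 <= eta y y')%R.
  rewrite /eta divr_ge0 ?(ltW s0) //.
  case: eqP => [[-> ->]|_]; first by rewrite mulr1 subr_ge0.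
  by rewrite mulr0 subr0.
exists eta => //; split => //; split => [y|y'].
- apply: (@EFin_of_affine_eq _ ((1 - s) * (y == x)%:R) s) => //.
  by rewrite -(esum_dirac_mix2_row s x x') // -xiE row.
- apply: (@EFin_of_affine_eq _ ((1 - s) * (y' == x')%:R) s) => //.
  by rewrite -(esum_dirac_mix2_col s x x') // -xiE col.
Qed.

End dirac_mixtures.

Section wasserstein.
Context {R : realType} {V : choiceType} (nbr : V -> {fset V}).
Local Open Scope ereal_scope.

Lemma W1_ge0 (mu mu' : V -> R) : 0 <= W1 nbr mu mu'.
Proof.
apply: le_ereal_inf_tmp => _ [xi [xi0 _] <-]; apply: esum_ge0 => p _.
by apply: mule_ge0; rewrite ?lee_fin ?gdist_ge0.
Qed.

Lemma W1_dirac_mix (s : R) (x x' : V) (mu mu' : V -> R) :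
  (0 < s <= 1)%R -> gdist R nbr x x' \is a fin_num ->
  (forall xi, coupling (dirac_mix s x mu) (dirac_mix s x' mu') xi -> (1 - s <= xi x x')%R) ->
  W1 nbr (dirac_mix s x mu) (dirac_mix s x' mu') =
  (1 - s)%:E * gdist R nbr x x' + s%:E * W1 nbr mu mu'.
Proof.
move=> s01 dfin diag; have /andP[s0 s1] := s01.
have s01' : (0 <= s <= 1)%R by rewrite ltW.
rewrite /W1 -ereal_inf_pZl // -ereal_inf_addl ?fin_numM //.
congr ereal_inf; apply/seteqP; split.
- move=> _ [xi Cxi <-].
  have [eta Ceta ->] := coupling_dirac_mix_decomp s01 (diag xi Cxi) Cxi.
  have [eta0 _] := Ceta.
  exists (s%:E * \esum_(p in [set: V * V]) ((eta p.1 p.2)%:E * gdist R nbr p.1 p.2)).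
    by exists (\esum_(p in [set: V * V]) ((eta p.1 p.2)%:E * gdist R nbr p.1 p.2)) => //;
      exists eta.
  by rewrite esum_dirac_mix2_cost // => *; exact: gdist_ge0.
- move=> _ [_ [_ [eta Ceta <-] <-] <-].
  exists (dirac_mix2 s x x' eta); first exact: coupling_dirac_mix2.
  by rewrite esum_dirac_mix2_cost //; [case: Ceta|move=> *; exact: gdist_ge0].
Qed.

Lemma coupling_mul (mu mu' : V -> R) :
  (forall y, 0 <= mu y)%R -> (forall y, 0 <= mu' y)%R ->
  \esum_(y in [set: V]) (mu y)%:E = 1 -> \esum_(y in [set: V]) (mu' y)%:E = 1 ->
  coupling mu mu' (fun y y' => mu y * mu' y')%R.
Proof.
move=> mu0 mu'0 mass mass'; split; first by move=> y y'; rewrite mulr_ge0.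
split => [y|y'].
- under eq_esum do rewrite EFinM.
  by rewrite esumZl ?mass' ?mule1 // => v; rewrite lee_fin.
- under eq_esum do rewrite mulrC EFinM.
  by rewrite esumZl ?mass ?mule1 // => v; rewrite lee_fin.
Qed.

End wasserstein.

Section lazy_random_walk.
Context {R : realType} {V : choiceType} (nbr : V -> {fset V}).
Implicit Types (t : R) (x y z : V).

Lemma lazy_rw_ge0 t z y : 0 <= t <= 1 -> 0 <= lazy_rw nbr t z y.
Proof.
case/andP=> t0 t1; rewrite /lazy_rw; case: ifP => _; first by rewrite subr_ge0.
by case: ifP => // _; rewrite divr_ge0.
Qed.

Lemma lazy_rw_closed_nbr t z y : lazy_rw nbr t z y != 0 -> closed_nbr nbr z y.
Proof.
by rewrite /lazy_rw /closed_nbr; case: (y == z); case: (y \in nbr z); rewrite ?eqxx.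
Qed.

Lemma lazy_rwE t z : lazy_rw nbr t z = dirac_mix (2 * t) z (lazy_rw nbr (1/2) z).
Proof.
apply/funext => y; rewrite /dirac_mix /lazy_rw.
case: ifP => _; first by rewrite mulr1; field.
rewrite mulr0 add0r; case: ifP => _; last by rewrite mulr0.
by rewrite mulrA; congr (_ / _); field.
Qed.

Local Open Scope ereal_scope.

Lemma esum_lazy_rw_off t z : simple_graph nbr -> (0 <= t)%R -> (0 < deg nbr z)%N ->
  \esum_(v in [set: V]) (if v == z then 0 else lazy_rw nbr t z v)%:E = t%:E.
Proof.
move=> [_ irr] t0 dz.
transitivity (\esum_(v in [set: V]) (if v \in nbr z then (t / (deg nbr z)%:R)%:E else 0)).
  apply: eq_esum => v _; rewrite /lazy_rw.
  by case: eqP => [->|_]; [rewrite (negPf (irr z))|case: ifP].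
rewrite esum_if_in_fset ?divr_ge0 //; congr EFin.
by rewrite -(mulr_natr (t / _)) divfK // pnatr_eq0 -lt0n.
Qed.

Lemma esum_lazy_rw t z : simple_graph nbr -> (0 <= t <= 1)%R -> (0 < deg nbr z)%N ->
  \esum_(v in [set: V]) (lazy_rw nbr t z v)%:E = 1.
Proof.
move=> G /andP[t0 t1] dz.
transitivity (\esum_(v in [set: V]) ((if v == z then (1 - t)%:E else 0) +
    (if v == z then 0 else lazy_rw nbr t z v)%:E)).
  by apply: eq_esum => v _; rewrite /lazy_rw; case: eqP => _; rewrite ?adde0 ?add0e.
rewrite esumD; last 2 first.
- by move=> v _; case: ifP => _ //; rewrite lee_fin subr_ge0.
- by move=> v _; rewrite lee_fin; case: ifP => _ //; rewrite lazy_rw_ge0 ?t0.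
by rewrite esum_if_eq ?lee_fin ?subr_ge0 // esum_lazy_rw_off // -EFinD subrK.
Qed.

Lemma coupling_lazy_rw_diag_ge t x x' xi : simple_graph nbr -> (0 < deg nbr x')%N ->
  (0 <= t <= 1)%R -> coupling (lazy_rw nbr t x) (lazy_rw nbr t x') xi ->
  (1 - 2 * t <= xi x x')%R.
Proof.
move=> G dx' t01 /(coupling_diag_ge x x').
rewrite esum_lazy_rw_off ?(andP t01).1 // /lazy_rw eqxx -EFinD lee_fin.
by case/andP: t01 => *; lra.
Qed.

Lemma W1_lazy_rw t x x' : simple_graph nbr -> (0 < deg nbr x')%N ->
  (0 < t <= 1/2)%R -> gdist R nbr x x' \is a fin_num ->
  W1 nbr (lazy_rw nbr t x) (lazy_rw nbr t x') =
  (1 - 2 * t)%:E * gdist R nbr x x' +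
  (2 * t)%:E * W1 nbr (lazy_rw nbr (1/2) x) (lazy_rw nbr (1/2) x').
Proof.
move=> G dx' /andP[t0 th] dfin.
rewrite (lazy_rwE t x) (lazy_rwE t x'); apply: W1_dirac_mix => //.
  by apply/andP; split; lra.
move=> xi; rewrite -!lazy_rwE; apply: coupling_lazy_rw_diag_ge => //.
by apply/andP; split; lra.
Qed.

(* Half-lazy walks are supported on closed neighbourhoods, so under the product
   coupling every pair is at distance at most [d(x, x') + 2]. *)
Lemma W1_lazy_rw_half_fin x x' : simple_graph nbr ->
  (0 < deg nbr x)%N -> (0 < deg nbr x')%N -> gdist R nbr x x' \is a fin_num ->
  W1 nbr (lazy_rw nbr (1/2 : R) x) (lazy_rw nbr (1/2 : R) x') \is a fin_num.
Proof.
move=> G dx dx' dfin.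
have h01 : (0 <= (1/2 : R) <= 1)%R by apply/andP; split; lra.
set mu := lazy_rw nbr (1/2) x; set mu' := lazy_rw nbr (1/2) x'.
have mu0 y : (0 <= mu y)%R by apply: lazy_rw_ge0.
have mu'0 y : (0 <= mu' y)%R by apply: lazy_rw_ge0.
pose pi y y' := (mu y * mu' y')%R.
have pi0 p : 0 <= (pi p.1 p.2)%:E by rewrite lee_fin mulr_ge0.
have pi_mass : \esum_(p in [set: V * V]) (pi p.1 p.2)%:E = 1.
  have -> : [set: V * V] = [set: V] `*`` (fun=> [set: V]) by apply/seteqP; split.
  rewrite -(@esum_esum R V V setT (fun=> setT) (fun y y' => (pi y y')%:E)); last first.
    by move=> y y' _ _; rewrite lee_fin mulr_ge0.
  under eq_esum do (under eq_esum do rewrite EFinM; rewrite esumZl ?esum_lazy_rw ?mule1 //).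
  exact: esum_lazy_rw.
have [D DE] : exists D, gdist R nbr x x' = D%:E.
  by case: (gdist R nbr x x') dfin => // D; exists D.
have D0 : (0 <= D + 2)%R by have := gdist_ge0 nbr (R:=R) x x'; rewrite DE lee_fin => *; lra.
rewrite ge0_fin_numE ?W1_ge0 //.
apply: (@le_lt_trans _ _ (\esum_(p in [set: V * V]) ((pi p.1 p.2)%:E * gdist R nbr p.1 p.2))).
  by apply: ereal_inf_lbound; exists pi => //; apply: coupling_mul => //; exact: esum_lazy_rw.
apply: (@le_lt_trans _ _ (\esum_(p in [set: V * V]) ((D + 2)%:E * (pi p.1 p.2)%:E))).
  apply: le_esum => -[y y'] _ /=; rewrite muleC.
  have [->|pi_neq0] := eqVneq (pi y y') 0%R; first by rewrite !mule0.
  apply: lee_wpmul2r; first by rewrite lee_fin mulr_ge0.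
  rewrite EFinD -DE; apply: gdist_closed_nbr_le => //; apply: (@lazy_rw_closed_nbr (1/2)).
  - by apply: contraNneq pi_neq0 => e; rewrite /pi /mu e mul0r.
  - by apply: contraNneq pi_neq0 => e; rewrite /pi /mu' e mulr0.
by rewrite esumZl // pi_mass mule1 ltry.
Qed.

End lazy_random_walk.

Theorem proposition1 (R : realType) (V : choiceType) (nbr : V -> {fset V})
  (x x' : V) :
  simple_graph nbr ->
  x != x' ->
  gdist R nbr x x' != +oo%E ->
  (0 < deg nbr x)%N -> (0 < deg nbr x')%N ->
  forall t : R, 0 < t <= 1 / 2 ->
  ric R nbr x x' = (kappa nbr t x x' / t)%:E.
Proof.
move=> G xx' dx_fin dx dx' t ht.
have d_ge1 := gdist_ge1 nbr (R:=R) xx'.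
have [D DE] : exists D, gdist R nbr x x' = D%:E.
  by move: dx_fin d_ge1; case: (gdist R nbr x x') => // D _ _; exists D.
have D_ge1 : 1 <= D by rewrite -lee_fin -DE.
have dfin : gdist R nbr x x' \is a fin_num by rewrite DE.
have [w wE] : exists w, W1 nbr (lazy_rw nbr (1/2 : R) x) (lazy_rw nbr (1/2) x') = w%:E.
  move: (W1_lazy_rw_half_fin nbr x x' G dx dx' dfin).
  by case: (W1 nbr _ _) => // w _; exists w.
have kappaE s : 0 < s <= 1/2 -> kappa nbr s x x' / s = 2 * (1 - w / D).
  move=> hs; rewrite /kappa W1_lazy_rw // DE wE -!EFinM -EFinD /=.
  by case/andP: hs => *; field; apply/andP; split; lra.
rewrite kappaE // /ric; apply: limf_einf_near_cst.
near=> s; rewrite kappaE //; apply/andP; split; near: s; first exact: nbhs_right_gt.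
by apply: nbhs_right_le; lra.
Unshelve. all: end_near.
Qed.
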